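(* Let $n\ge2$ and let $A=(a_{ij})$ be an $n\times n$ nonnegative irreducible matrix with row sums $r_1\ge r_2\ge\cdots\ge r_n$. Let $S=\min_{1\le i\le n}a_{ii}$ and $T=\min_{i\ne j}a_{ij}$. Then \[\rho(A)\ge \frac{r_n+S-T+\sqrt{(r_n-S+T)^2+4T\sum_{k=1}^{n-1}(r_k-r_n)}}{2}.\] Equality holds if and only if $r_1=\cdots=r_n$, or $T>0$ and for some $2\le t\le n$: (i) $a_{kk}=S$ for $1\le k\le t-1$; (ii) $a_{kl}=T$ for all $1\le k\le n$, $1\le l\le t-1$, $k\ne l$; (iii) $r_t=\cdots=r_n$.
   Context: $\rho(A)$ denotes the spectral radius of $A$. *)

(* Matrices with entries in algC (algebraic complex numbers);
   nonnegativity of entries forces them to be real. *)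
From HB Require Import structures.
From mathcomp Require Import all_boot all_order all_algebra all_field.
Set Implicit Arguments. Unset Strict Implicit. Unset Printing Implicit Defensive.
Import Order.TTheory GRing.Theory Num.Theory.
Local Open Scope ring_scope.

(* The (complex) eigenvalues of A, listed with algebraic multiplicity:
   the roots of the characteristic polynomial in the algebraically closed algC. *)
Definition eigenvalues n (A : 'M[algC]_n) : seq algC :=
  sval (closed_field_poly_normal (char_poly A)).

Definition spectral_radius n (A : 'M[algC]_n) : algC :=
  \big[Num.max/0]_(z <- eigenvalues A) `|z|.

Definition nonneg_mx n (A : 'M[algC]_n) : Prop := forall i j, 0 <= A i j.

(* A is reducible iff, after a simultaneous permutation of rows and columns,
   it has the block form [[B, 0], [C, D]] with square nonempty B, D; i.e. iff
   some proper nonempty index set I has A i j = 0 for i in I, j not in I. *)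
Definition reducible_mx n (A : 'M[algC]_n) : Prop :=
  exists I : {set 'I_n}, [/\ I != set0, I != setT &
    forall i j, i \in I -> j \notin I -> A i j = 0].
Definition irreducible_mx n (A : 'M[algC]_n) : Prop := ~ reducible_mx A.

Definition row_sum n (A : 'M[algC]_n) (i : 'I_n) : algC := \sum_(j < n) A i j.

(* minimum of a nonempty list (default 0 for the empty list, never used here) *)
Definition seq_min (s : seq algC) : algC := foldr Num.min (head 0 s) s.

Definition diag_min n (A : 'M[algC]_n) : algC :=
  seq_min [seq A i i | i <- enum 'I_n].

Definition offdiag_min n (A : 'M[algC]_n) : algC :=
  seq_min [seq A ij.1 ij.2 | ij <- enum [pred ij : 'I_n * 'I_n | ij.1 != ij.2]].

(* r_n, the last row sum (index n-1 in 0-based numbering) *)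
Definition last_row_sum n (A : 'M[algC]_n) : algC :=
  nth 0 [seq row_sum A i | i <- enum 'I_n] n.-1.

From HB Require Import structures.
From mathcomp Require Import all_boot all_order all_algebra all_field.
From mathcomp Require Import polyrcf.
From mathcomp Require Import ring lra zify.
Set Implicit Arguments. Unset Strict Implicit. Unset Printing Implicit Defensive.
Import Order.TTheory GRing.Theory Num.Theory.
Local Open Scope ring_scope.

(* The proof is a Collatz--Wielandt argument.  Over a real closed field, let
   rho be a number with the two Collatz--Wielandt properties: B x >= t x for a
   positive x forces t <= rho, and B x = t x for a positive x forces rho <= t.
   If B is moreover irreducible, a positive x with B x >= t x gives t <= rho,
   with equality iff B x = t x (perturbation argument, [cw_equality]).  The
   bound theta of the theorem is the larger root of
   (theta - r_n) (theta - S + T) = T * sum_k (r_k - r_n); testing with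
   x_k = 1 + (r_k - r_n) / (theta - S + T), the slack of B x >= theta x is a
   nonnegative combination of the excesses a_ij - (S or T), which yields the
   bound and its equality case ([row_sum_bound]). *)

Section FiniteExtrema.
Variable R : realDomainType.

Lemma ord_argmin n (f : 'I_n -> R) : (0 < n)%N -> exists i, forall j, f i <= f j.
Proof.
case: n f => [//|m] f _; exists [arg min_(i < ord0) f i]%O.
by case: arg_minP => // i _ H j; apply: H.
Qed.

Lemma ord_argmax n (f : 'I_n -> R) : (0 < n)%N -> exists i, forall j, f j <= f i.
Proof.
move=> n0; have [i Hi] := ord_argmin (fun i => - f i) n0.
by exists i => j; rewrite -lerN2.
Qed.

End FiniteExtrema.

(* A monic polynomial over a real closed field without roots in [th, +oo)
   is positive there: it is positive near +oo and cannot change sign. *)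
Lemma monic_pos_right (R : rcfType) (p : {poly R}) (th : R) :
  p \is monic -> (forall mu, th <= mu -> ~~ root p mu) ->
  forall y, th <= y -> 0 < p.[y].
Proof.
move=> /monicP lc1 Hno y hy.
have [N HN] : exists N, forall x, N <= x -> lead_coef p <= p.[x].
  by apply: poly_pinfty_gt_lc; rewrite lc1 ltr01.
have hpB : 1 <= p.[y + `|N - y|] by rewrite -lc1 HN //; have := ler_norm (N - y); lra.
rewrite ltNge; apply/negP => py.
have [z /andP[yz _]] : exists2 z, y <= z <= y + `|N - y| & root p z.
  by apply: poly_ivt; [rewrite lerDl normr_ge0 | rewrite py /=; lra].
by apply/negP/Hno/(le_trans hy).
Qed.

Section SubinvariantVector.
Variables (R : rcfType) (n : nat) (A : 'M[R]_n).
Hypothesis A_ge0 : forall i j, 0 <= A i j.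

Definition adj_vec : 'cV[{poly R}]_n := \adj (char_poly_mx A) *m const_mx 1.

Local Notation p := (char_poly A).
Local Notation u Y k := (adj_vec k 0).[Y].

Lemma adj_vec_eq Y i : Y * u Y i = p.[Y] + \sum_k A i k * u Y k.
Proof.
have : char_poly_mx A *m adj_vec = p *: const_mx 1.
  by rewrite /adj_vec mulmxA mul_mx_adj mul_scalar_mx.
move: adj_vec => U /(congr1 (fun M : 'cV_n => (M i 0).[Y])).
rewrite /= /char_poly_mx mulmxBl mul_scalar_mx !mxE mulr1.
rewrite hornerD hornerN hornerM hornerX horner_sum => <-.
suff -> : \sum_k A i k * (U k 0).[Y] = \sum_j ((A ^ polyC)%sesqui i j * U j 0).[Y].
  by rewrite subrK.
by apply: eq_bigr => k _; rewrite mxE hornerCM.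
Qed.

Lemma adj_vec_pos Y : 0 < p.[Y] -> (forall k, 0 <= u Y k) -> forall k, 0 < u Y k.
Proof.
move=> pY u0 k; rewrite lt_def u0 andbT; apply/eqP => uk.
have : 0 <= \sum_j A k j * u Y j by apply: sumr_ge0 => j _; apply: mulr_ge0.
by have := adj_vec_eq Y k; rewrite uk mulr0; lra.
Qed.

(* Beyond every row sum, u(Y) is nonnegative (look at its least entry). *)
Lemma adj_vec_ge0_large Y : (forall i, \sum_j A i j < Y) -> 0 < p.[Y] ->
  forall k, 0 <= u Y k.
Proof.
move=> rowY pY k.
have [i Hi] := ord_argmin (fun k => u Y k) (leq_trans (ltn0Sn k) (ltn_ord k)).
apply: le_trans (Hi k); rewrite leNgt; apply/negP => ui.
have hsum : (\sum_j A i j) * u Y i <= \sum_j A i j * u Y j.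
  by rewrite mulr_suml; apply: ler_sum => j _; apply: ler_wpM2l.
have := adj_vec_eq Y i; have := rowY i.
set r := \sum_j A i j in hsum * => ri eqi.
have : (Y - r) * u Y i < 0 by rewrite pmulr_rlt0 ?subr_gt0.
by rewrite mulrBl; lra.
Qed.

(* Positivity of u persists downwards as long as p stays positive: an entry of u
   could only become nonpositive after crossing a root of prod_k u_k. *)
Lemma adj_vec_pos_below th Y0 : th <= Y0 -> (forall y, th <= y -> 0 < p.[y]) ->
  (forall k, 0 < u Y0 k) -> forall k, 0 < u th k.
Proof.
move=> thY0 p_pos uY0.
pose Q := \prod_k adj_vec k 0.
have QE y : Q.[y] = \prod_k u y k by rewrite horner_prod.
have QY0 : 0 < Q.[Y0] by rewrite QE; apply: prodr_gt0.
have sweep z : th <= z -> z <= Y0 -> {in `]z, Y0[, forall y, ~~ root Q y} ->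
    forall k, 0 < u z k.
  move=> thz zY0 noroot; apply: adj_vec_pos; first exact: p_pos.
  move=> k; rewrite leNgt; apply/negP => uz.
  have [w /andP[zw wY0] rw] : exists2 w, z <= w <= Y0 & root (adj_vec k 0) w.
    by apply: poly_ivt => //; have := uY0 k; lra.
  move/eqP: (rw) => uw.
  have zw' : z < w by rewrite lt_def zw andbT; apply: contraTneq uz => <-; lra.
  have wY0' : w < Y0 by rewrite lt_def wY0 andbT; apply: contraTneq (uY0 k) => ->; lra.
  have := noroot w; rewrite in_itv /= zw' wY0' => /(_ isT)/negP; apply.
  by rewrite rootE QE (bigD1 k) //= uw mul0r.
case: (prev_rootP Q th Y0) => [Q0 | y _ Qy | c _ _ noroot].
- by move: QY0; rewrite Q0 horner0 ltxx.
- rewrite in_itv /= => /andP[thy yY0] noroot; exfalso.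
  have : 0 < Q.[y] by rewrite QE; apply: prodr_gt0 => k _; apply: sweep; rewrite ?ltW.
  by rewrite Qy ltxx.
- by apply: sweep.
Qed.

(* Collatz--Wielandt, lower side: a positive vector x with A x >= th x forces a
   characteristic root mu >= th.  Otherwise u(th) > 0 and (th I - A) u(th) > 0,
   which is incompatible with A x >= th x after scaling u(th) to touch x. *)
Lemma subinvariant_root (x : 'I_n -> R) th : (0 < n)%N -> (forall i, 0 < x i) ->
  (forall i, th * x i <= \sum_j A i j * x j) ->
  ~ (forall mu, th <= mu -> ~~ root p mu).
Proof.
move=> n0 x0 Hx noroot.
have p_pos := monic_pos_right (char_poly_monic A) noroot.
pose tot := \sum_i \sum_j A i j.
have row_le_tot i : \sum_j A i j <= tot.
  rewrite /tot [X in _ <= X](bigD1 i) //= lerDl.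
  by apply: sumr_ge0 => ? _; apply: sumr_ge0 => ? _; exact: A_ge0.
have tot_ge0 : 0 <= tot by apply: sumr_ge0 => ? _; apply: sumr_ge0.
pose Y0 := 1 + `|th| + tot.
have thY0 : th <= Y0 by have := ler_norm th; rewrite /Y0; lra.
have rowY0 i : \sum_j A i j < Y0.
  by have := row_le_tot i; have := normr_ge0 th; rewrite /Y0; lra.
have uY0 := adj_vec_pos (p_pos _ thY0) (adj_vec_ge0_large rowY0 (p_pos _ thY0)).
have uth := adj_vec_pos_below thY0 p_pos uY0.
have [i Hi] := ord_argmax (fun k => x k / u th k) n0.
set lam := x i / u th i in Hi.
have lam0 : 0 < lam by rewrite divr_gt0.
have x_le j : x j <= lam * u th j by rewrite -ler_pdivrMr ?Hi.
have lam_ui : lam * u th i = x i by rewrite divfK // gt_eqF.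
have : \sum_j A i j * x j <= lam * \sum_j A i j * u th j.
  by rewrite mulr_sumr; apply: ler_sum => j _; rewrite mulrCA; apply: ler_wpM2l.
have := adj_vec_eq th i; have := Hx i; have := p_pos th (lexx th).
have : lam * (th * u th i) = th * x i by rewrite mulrCA lam_ui.
nra.
Qed.

End SubinvariantVector.

Section CollatzWielandt.
Variables (R : realFieldType) (n : nat) (B : 'M[R]_n).

Definition cw_lower (rho : R) := forall (x : 'I_n -> R) t, (forall i, 0 < x i) ->
  (forall i, t * x i <= \sum_j B i j * x j) -> t <= rho.

Definition cw_upper (rho : R) := forall (x : 'I_n -> R) t, (forall i, 0 < x i) ->
  (forall i, \sum_j B i j * x j = t * x i) -> rho <= t.

(* Irreducibility, stated positively: every proper nonempty set of indices
   has an entry of B leading out of it. *)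
Definition mx_connected := forall I : {set 'I_n}, I != set0 -> I != setT ->
  exists i j, [/\ i \in I, j \notin I & B i j != 0].

Definition slack (x : 'I_n -> R) th k := \sum_j B k j * x j - th * x k.

Definition slack_support x th : {set 'I_n} := [set k | 0 < slack x th k].

Hypothesis B_ge0 : forall i j, 0 <= B i j.
Hypothesis B_conn : mx_connected.

Lemma slack_bump x th j e k :
  slack (fun l => x l + (if l == j then e else 0)) th k =
  slack x th k + B k j * e - (if k == j then th * e else 0).
Proof.
have bump : \sum_l B k l * (if l == j then e else 0) = B k j * e.
  by rewrite (bigD1 j) //= eqxx big1 ?addr0 // => l /negPf->; rewrite mulr0.
rewrite /slack; under eq_bigr do rewrite mulrDr.
by rewrite big_split /= bump; case: eqP; rewrite ?mulr0 ?addr0; lra.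
Qed.

(* If the slack is nonnegative but vanishes somewhere, some entry B i j > 0
   leads from a zero-slack row i to a positive-slack column j; bumping x j a
   little makes the slack of row i positive without losing any other. *)
Lemma slack_support_grow x th : (forall i, 0 < x i) -> (forall i, 0 <= slack x th i) ->
  slack_support x th != set0 -> slack_support x th != setT ->
  exists2 z : 'I_n -> R, (forall i, 0 < z i) /\ (forall i, 0 <= slack z th i) &
    (#|slack_support x th| < #|slack_support z th|)%N.
Proof.
set J := slack_support x th => x0 s0 J0 JT.
have [i [j [iJ jJ Bij]]] : exists i j, [/\ i \in ~: J, j \notin ~: J & B i j != 0].
  apply: B_conn; first by apply: contra_neq JT => h; rewrite -[J]setCK h setC0.
  by apply: contra_neq J0 => h; rewrite -[J]setCK h setCT.
rewrite inE in iJ; rewrite inE negbK inE in jJ.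
have n_th := normr_ge0 th; have le_th := ler_norm th.
pose e := slack x th j / (`|th| + 1).
have e0 : 0 < e by rewrite divr_gt0 //; lra.
have e_small : `|th| * e < slack x th j.
  have : e * (`|th| + 1) = slack x th j by rewrite divfK //; apply: lt0r_neq0; lra.
  nra.
have th_e : th * e <= `|th| * e by rewrite ler_pM2r.
have Be k : 0 <= B k j * e by apply: mulr_ge0 => //; apply: ltW.
have Bie : 0 < B i j * e by rewrite mulr_gt0 // lt_def Bij B_ge0.
pose z l := x l + (if l == j then e else 0).
have z_ge0 k : 0 <= slack z th k.
  by rewrite slack_bump; have := Be k; have := s0 k; case: eqP => [-> | _]; lra.
have z_pos k : 0 < slack x th k \/ k = i -> 0 < slack z th k.
  rewrite slack_bump; have := Be k; have := s0 i.
  case: eqP => [-> | _] Bk si; first lra.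
  by case=> [| ->]; lra.
exists z; first by split=> // k; rewrite /z; case: eqP => _; have := x0 k; lra.
apply: (@leq_trans #|i |: J|); first by rewrite cardsU1 iJ.
apply/subset_leq_card/subsetP => k; rewrite !inE => /orP[/eqP ki | kJ].
  by apply: z_pos; right.
by apply: z_pos; left.
Qed.

Lemma slack_full_support x th : (forall i, 0 < x i) -> (forall i, 0 <= slack x th i) ->
  (exists k, 0 < slack x th k) ->
  exists2 y : 'I_n -> R, (forall i, 0 < y i) & (forall i, 0 < slack y th i).
Proof.
move=> x0 s0 [k sk].
have grow m : (m < n)%N -> exists2 y : 'I_n -> R,
    (forall i, 0 < y i) /\ (forall i, 0 <= slack y th i) & (m < #|slack_support y th|)%N.
  elim: m => [_ | m IH lt_mn].
    by exists x => //; rewrite card_gt0; apply/set0Pn; exists k; rewrite inE.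
  have [y [y0 sy] my] := IH (ltnW lt_mn).
  have [yT | yT] := eqVneq (slack_support y th) setT.
    by exists y => //; rewrite yT cardsT card_ord.
  have y0' : slack_support y th != set0 by rewrite -card_gt0 (leq_trans _ my).
  have [z zpos yz] := slack_support_grow y0 sy y0' yT.
  by exists z => //; apply: leq_trans yz.
have n0 : (0 < n)%N := leq_trans (ltn0Sn k) (ltn_ord k).
have [y [y0 _] full] := grow n.-1 (ltac:(by rewrite ltn_predL)).
rewrite prednK // in full.
exists y => // i.
have : slack_support y th = setT.
  by apply/eqP; rewrite eqEcard subsetT cardsT card_ord.
by move/setP/(_ i); rewrite !inE.
Qed.

Lemma cw_strict rho x th : cw_lower rho -> (forall i, 0 < x i) ->
  (forall i, 0 <= slack x th i) -> (exists k, 0 < slack x th k) -> th < rho.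
Proof.
move=> cwL x0 s0 [k sk].
have [y y0 sy] := slack_full_support x0 s0 (ex_intro _ k sk).
have [m Hm] := ord_argmin (fun l => slack y th l / y l) (leq_trans (ltn0Sn k) (ltn_ord k)).
set d := slack y th m / y m in Hm.
have d0 : 0 < d by rewrite divr_gt0.
suff : th + d <= rho by lra.
apply: (cwL y _ y0) => l; have := Hm l; rewrite ler_pdivlMr // /slack; lra.
Qed.

Lemma cw_equality rho x th : cw_lower rho -> cw_upper rho ->
  (forall i, 0 < x i) -> (forall i, 0 <= slack x th i) ->
  th <= rho /\ (rho = th <-> forall i, slack x th i = 0).
Proof.
move=> cwL cwU x0 s0.
have th_rho : th <= rho by apply: (cwL x _ x0) => i; have := s0 i; rewrite /slack; lra.
split => //; split => [rho_th i | s_0].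
  apply/eqP; rewrite eq_le s0 andbT leNgt; apply/negP => si.
  by have := cw_strict cwL x0 s0 (ex_intro _ i si); rewrite rho_th ltxx.
apply/eqP; rewrite eq_le th_rho andbT.
by apply: (cwU x _ x0) => i; have := s_0 i; rewrite /slack; lra.
Qed.

End CollatzWielandt.

Lemma le_last n (l k : 'I_n) : val l = n.-1 -> (k <= l)%N.
Proof. by move=> l_last; have := ltn_ord k; rewrite l_last; lia. Qed.

Lemma ge_last_eq n (l k : 'I_n) : val l = n.-1 -> (l <= k)%N -> k = l.
Proof. by move=> l_last lk; apply/val_inj/eqP; rewrite eqn_leq lk le_last. Qed.

(* For a nonincreasing f on indices 0..n-1, the indices j with f j <> f (n-1)
   form an initial segment [0, t), with t >= 1 unless f is constant; this turns
   "every such j satisfies Q" into the prefix form of the equality condition. *)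
Lemma nonincreasing_prefix (R : realDomainType) n (f : 'I_n -> R) (l : 'I_n)
    (Q : 'I_n -> Prop) :
  val l = n.-1 -> (forall i j : 'I_n, (i <= j)%N -> f j <= f i) ->
  (forall j, f j != f l -> Q j) <->
  (forall i j, f i = f j) \/
  exists t : nat, [/\ (1 <= t)%N, (t <= n.-1)%N, (forall j : 'I_n, (j < t)%N -> Q j) &
    (forall k m : 'I_n, (t <= k)%N -> (t <= m)%N -> f k = f m)].
Proof.
move=> l_last f_sorted.
have f_ge_last k : f l <= f k by apply/f_sorted/le_last.
split; last first.
  case=> [f_const j | [t [t1 tl Qt f_tail]] j]; first by rewrite (f_const j l) eqxx.
  by case: (ltnP j t) => [/Qt // | tj]; rewrite (f_tail j l) ?eqxx ?l_last.
move=> HQ.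
have [/forallP f_const | /forallPn [j0 fj0]] := boolP [forall j, f j == f l].
  by left => i j; rewrite (eqP (f_const i)) (eqP (f_const j)).
right.
have ex_t : exists t, [exists j : 'I_n, (val j == t) && (f j == f l)].
  by exists (val l); apply/existsP; exists l; rewrite !eqxx.
have [t /existsP[jt /andP[/eqP jt_t /eqP fjt]] t_min] := ex_minnP ex_t.
have tail (k : 'I_n) : (t <= k)%N -> f k = f l.
  by move=> tk; apply/eqP; rewrite eq_le f_ge_last andbT -fjt f_sorted ?jt_t.
exists t; split.
- by rewrite lt0n; apply: contraNneq fj0 => t0; rewrite tail // t0.
- by rewrite -l_last t_min //; apply/existsP; exists l; rewrite !eqxx.
- move=> j j_t; apply: HQ; apply: contraTneq j_t => fj; rewrite -leqNgt t_min //.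
  by apply/existsP; exists j; rewrite fj !eqxx.
- by move=> k m tk tm; rewrite !tail.
Qed.

Definition bound_with (F : numFieldType) (sq : F -> F) (rn S T Sig : F) : F :=
  (rn + S - T + sq ((rn - S + T) ^+ 2 + 4 * T * Sig)) / 2.

Definition equality_case (F : numDomainType) n (A : 'M[F]_n) (S T : F) : Prop :=
  let r i := \sum_(j < n) A i j in
  (forall i j : 'I_n, r i = r j) \/
  (0 < T /\
   exists t : nat, [/\ (1 <= t)%N, (t <= n.-1)%N,
     (forall k : 'I_n, (k < t)%N -> A k k = S),
     (forall k l : 'I_n, (l < t)%N -> k != l -> A k l = T) &
     (forall k l : 'I_n, (t <= k)%N -> (t <= l)%N -> r k = r l)]).

Section RowSumBound.
Variables (R : rcfType) (n : nat) (B : 'M[R]_n) (rho S T : R) (l : 'I_n).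
Hypothesis B_ge0 : forall i j, 0 <= B i j.
Hypothesis B_conn : mx_connected B.
Hypothesis cwL : cw_lower B rho.
Hypothesis cwU : cw_upper B rho.
Hypothesis l_last : val l = n.-1.
Hypothesis rows_sorted : forall i j : 'I_n, (i <= j)%N -> \sum_k B j k <= \sum_k B i k.
Hypothesis S_le : forall i, S <= B i i.
Hypothesis T_le : forall i j, i != j -> T <= B i j.
Hypothesis T_ge0 : 0 <= T.

Local Notation r i := (\sum_(k < n) B i k).
Local Notation rn := (r l).
Local Notation Sig := (\sum_(k < n | (k < n.-1)%N) (r k - rn)).
Local Notation theta := (bound_with Num.sqrt rn S T Sig).

Lemma last_row_sum_min k : rn <= r k.
Proof. exact/rows_sorted/le_last. Qed.

Lemma diag_min_le_last : S <= rn.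
Proof.
rewrite (bigD1 l) //=; have := S_le l.
have : 0 <= \sum_(i < n | i != l) B l i by apply: sumr_ge0.
lra.
Qed.

Lemma Sig_ge0 : 0 <= Sig.
Proof. by apply: sumr_ge0 => k _; rewrite subr_ge0 last_row_sum_min. Qed.

(* The term k = n-1 of Sig vanishes, so Sig sums over all rows. *)
Lemma Sig_all : Sig = \sum_k (r k - rn).
Proof.
rewrite [RHS](bigID (fun k : 'I_n => (k < n.-1)%N)) /= [X in _ = _ + X]big1 ?addr0 // => k.
by rewrite -leqNgt -l_last => /(ge_last_eq l_last) ->; rewrite subrr.
Qed.

(* With T = 0 the bound is r_n; test with the all-ones vector. *)
Lemma row_sum_bound_T0 : T = 0 ->
  theta <= rho /\ (rho = theta <-> equality_case B S T).
Proof.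
move=> T0.
have theta_rn : theta = rn.
  rewrite /bound_with T0 mulr0 mul0r !addr0 subr0 sqrtr_sqr ger0_norm.
    by field.
  by have := diag_min_le_last; lra.
have slack1 i : slack B (fun=> 1) rn i = r i - rn.
  by rewrite /slack mulr1; under eq_bigr do rewrite mulr1.
have [lb eqv] : rn <= rho /\ (rho = rn <-> forall i, slack B (fun=> 1) rn i = 0).
  apply: (cw_equality B_ge0 B_conn cwL cwU) => [i | i]; first exact: ltr01.
  by rewrite slack1 subr_ge0 last_row_sum_min.
rewrite theta_rn eqv /equality_case T0 ltxx; split => //; split.
  by move=> H; left => i j; have := H i; have := H j; rewrite !slack1; lra.
by case=> [H i | []//]; rewrite slack1 (H i l) subrr.
Qed.

Lemma equality_case_columns : 0 < T ->
  equality_case B S T <->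
  (forall j, r j != rn -> forall i, B i j = if i == j then S else T).
Proof.
move=> T_gt0; rewrite (nonincreasing_prefix (fun j => forall i, B i j = _) l_last rows_sorted).
rewrite /equality_case; split.
  case=> [H | [_ [t [t1 tn Hd Ho Ht]]]]; [by left | right; exists t; split=> // j jt i].
  by case: eqP => [-> | /eqP ij]; [apply: Hd | apply: Ho].
case=> [H | [t [t1 tn Hc Ht]]]; [by left | right; split=> //; exists t].
split=> // [k kt | k m mt km]; first by rewrite (Hc k kt) eqxx.
by rewrite (Hc m mt) (negPf km).
Qed.

Lemma theta_quadratic : 0 < T ->
  0 < theta - S + T /\ (theta - rn) * (theta - S + T) = T * Sig.
Proof.
move=> T_gt0.
have Sig0 := Sig_ge0; have Srn := diag_min_le_last.
have TSig : 0 <= 4 * T * Sig by rewrite -mulrA mulr_ge0 // mulr_ge0.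
rewrite /bound_with; set w := rn - S + T; set q := Num.sqrt _.
have qq : q ^+ 2 = w ^+ 2 + 4 * T * Sig by apply: sqr_sqrtr; rewrite addr_ge0 ?sqr_ge0.
have qw : w <= q by rewrite (le_trans (ler_norm w)) // -sqrtr_sqr ler_wsqrtr // lerDl.
rewrite /w in qq qw *; split; [lra | nra].
Qed.

Lemma test_vector_slack th (c : 'I_n -> R) :
  (forall k, c k * (th - S + T) = r k - rn) -> T * \sum_k c k = th - rn ->
  forall i, slack B (fun k => 1 + c k) th i =
    \sum_j (B i j - (if i == j then S else T)) * c j.
Proof.
move=> c_def sum_c i.
have pattern : \sum_j (if i == j then S else T) * c j = S * c i + T * (\sum_j c j - c i).
  rewrite (bigD1 i) //= eqxx [in RHS](bigD1 i) //= addrAC subrr add0r mulr_sumr.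
  by congr (_ + _); apply: eq_bigr => j ji; rewrite eq_sym (negPf ji).
have -> : \sum_j (B i j - (if i == j then S else T)) * c j =
    \sum_j B i j * c j - \sum_j (if i == j then S else T) * c j.
  by rewrite -sumrB; apply: eq_bigr => j _; rewrite mulrBl.
have -> : slack B (fun k => 1 + c k) th i = r i + \sum_j B i j * c j - th * (1 + c i).
  by rewrite /slack -big_split; congr (_ - _); apply: eq_bigr => j _; rewrite mulrDr mulr1.
have := c_def i; rewrite pattern; lra.
Qed.

(* For T > 0, test with x = 1 + c, c_k = (r_k - r_n) / (theta - S + T) >= 0:
   the slack vanishes iff every column with c_j <> 0 is extremal. *)
Lemma row_sum_bound_Tpos : 0 < T ->
  theta <= rho /\ (rho = theta <-> equality_case B S T).
Proof.
move=> T_gt0; have [d_gt0 quad] := theta_quadratic T_gt0.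
set d := theta - S + T in d_gt0 quad.
pose c k := (r k - rn) / d.
have c_def k : c k * d = r k - rn by rewrite divfK // lt0r_neq0.
have c_ge0 k : 0 <= c k by rewrite divr_ge0 ?subr_ge0 ?last_row_sum_min ?ltW.
have sum_c : T * \sum_k c k = theta - rn.
  apply: (mulIf (lt0r_neq0 d_gt0)); rewrite -mulrA mulr_suml quad Sig_all.
  by congr (_ * _); apply: eq_bigr => k _; rewrite c_def.
have slackE := test_vector_slack c_def sum_c.
have E_ge0 i j : 0 <= B i j - (if i == j then S else T).
  by rewrite subr_ge0; case: eqP => [-> | /eqP]; [exact: S_le | exact: T_le].
have [lb eqv] : theta <= rho /\
    (rho = theta <-> forall i, slack B (fun k => 1 + c k) theta i = 0).
  apply: (cw_equality B_ge0 B_conn cwL cwU) => i; first by have := c_ge0 i; lra.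
  by rewrite slackE; apply: sumr_ge0 => j _; apply: mulr_ge0.
split => //; rewrite eqv equality_case_columns //; split => [zero j rj i | cols i].
  have cj : c j != 0 by apply: contra_neq rj => cj; have := c_def j; rewrite cj mul0r; lra.
  have /psumr_eq0P : \sum_j (B i j - (if i == j then S else T)) * c j = 0.
    by rewrite -slackE zero.
  move=> /(_ (fun j _ => mulr_ge0 (E_ge0 i j) (c_ge0 j)) j isT) /eqP.
  by rewrite mulf_eq0 (negPf cj) orbF subr_eq0 => /eqP.
rewrite slackE big1 // => j _; have [rj | rj] := eqVneq (r j) rn.
  by rewrite /c rj subrr mul0r mulr0.
by rewrite (cols j rj i) subrr mul0r.
Qed.

Lemma row_sum_bound : theta <= rho /\ (rho = theta <-> equality_case B S T).
Proof.
have [T0 | T_neq0] := eqVneq T 0; first exact: row_sum_bound_T0.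
by apply: row_sum_bound_Tpos; rewrite lt_def T_neq0 T_ge0.
Qed.

End RowSumBound.

Lemma eigenvalues_root n (A : 'M[algC]_n) z :
  (z \in eigenvalues A) = root (char_poly A) z.
Proof.
rewrite /eigenvalues; case: closed_field_poly_normal => s /= ->.
by rewrite (monicP (char_poly_monic A)) scale1r root_prod_XsubC.
Qed.

Lemma bigmax_norm_spec (s : seq algC) :
  let M := \big[Num.max/0]_(w <- s) `|w| in
  [/\ 0 <= M, (forall z, z \in s -> `|z| <= M) &
      (forall c, 0 <= c -> (forall z, z \in s -> `|z| <= c) -> M <= c)].
Proof.
elim: s => [|w s [M0 M_ub M_least]] /=; first by rewrite big_nil; split.
rewrite big_cons; set M := \big[Num.max/0]_(w <- s) `|w| in M0 M_ub M_least *.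
have [wM | Mw] := real_leP (normr_real w) (ger0_real M0).
  split => // [z | c c0 Hc]; first by rewrite inE => /orP[/eqP-> // | /M_ub].
  by apply: M_least => // z zs; apply: Hc; rewrite inE zs orbT.
split => [| z | c c0 Hc]; first exact: normr_ge0.
  by rewrite inE => /orP[/eqP-> // | /M_ub /le_trans]; apply; apply: ltW.
by apply: Hc; rewrite inE eqxx.
Qed.

Lemma spectral_radius_ge0 n (A : 'M[algC]_n) : 0 <= spectral_radius A.
Proof. by case: (bigmax_norm_spec (eigenvalues A)). Qed.

Lemma root_le_spectral_radius n (A : 'M[algC]_n) z :
  root (char_poly A) z -> `|z| <= spectral_radius A.
Proof.
by rewrite -eigenvalues_root; case: (bigmax_norm_spec (eigenvalues A)) => _ + _; apply.
Qed.

Lemma spectral_radius_le n (A : 'M[algC]_n) c : 0 <= c ->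
  (forall z, root (char_poly A) z -> `|z| <= c) -> spectral_radius A <= c.
Proof.
move=> c0 Hc; case: (bigmax_norm_spec (eigenvalues A)) => _ _; apply => // z.
by rewrite eigenvalues_root; apply: Hc.
Qed.

(* Eigenvalues of M are those of its transpose (used for left eigenvectors). *)
Lemma char_poly_tr (R : comNzRingType) m (M : 'M[R]_m) : char_poly M^T = char_poly M.
Proof.
rewrite /char_poly -det_tr; congr (\det _).
by apply/matrixP => i j; rewrite !mxE eq_sym.
Qed.

Section RealAlgebraicMatrices.
Variables (n : nat) (B : 'M[algR]_n).
Hypothesis B_ge0 : forall i j, 0 <= B i j.

Local Notation A := (map_mx algRval B).

(* The spectral radius of B, computed over algC, has the lower
   Collatz--Wielandt property: the characteristic root mu >= t given by
   [subinvariant_root] satisfies mu <= |mu| <= rho. *)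
Lemma cw_lower_spectral_radius (rho : algR) : (0 < n)%N ->
  val rho = spectral_radius A -> cw_lower B rho.
Proof.
move=> n0 rho_eq x t x0 Hx; rewrite leNgt; apply/negP => rho_t.
apply: (subinvariant_root B_ge0 n0 x0 Hx) => mu t_mu; apply/negP => root_mu.
have : `|val mu| <= spectral_radius A.
  by apply: root_le_spectral_radius; rewrite -map_char_poly rmorph_root.
rewrite -rho_eq => /(le_trans (real_ler_norm (algRvalP mu))) mu_rho.
by have := lt_le_trans rho_t (le_trans t_mu mu_rho); rewrite ltxx.
Qed.

(* It also has the upper one: if B x = t x with x > 0, every eigenvalue z of B
   satisfies |z| <= t (compare a left eigenvector v of z with x at the index
   where |v_i| / x_i is largest). *)
Lemma cw_upper_spectral_radius (rho : algR) : (0 < n)%N ->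
  val rho = spectral_radius A -> cw_upper B rho.
Proof.
move=> n0 rho_eq x t x0 Hx.
have t0 : 0 <= t.
  rewrite -(pmulr_lge0 t (x0 (Ordinal n0))) -Hx.
  by apply: sumr_ge0 => j _; apply: mulr_ge0 => //; apply: ltW.
have HxC i : \sum_j A i j * val (x j) = val t * val (x i).
  by rewrite -rmorphM -(Hx i) rmorph_sum; apply: eq_bigr => j _; rewrite mxE rmorphM.
have A_ge0 i j : 0 <= A i j by rewrite mxE; exact: B_ge0.
have xC_gt0 j : 0 < val (x j) := x0 j.
change (val rho <= val t); rewrite rho_eq; apply: spectral_radius_le => // z.
rewrite -char_poly_tr -eigenvalue_root_char => /eigenvalueP [v Hv v_neq0].
have Hvi i : \sum_j A i j * v 0 j = z * v 0 i.
  have := congr1 (fun M : 'rV_n => M 0 i) Hv; rewrite !mxE => <-.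
  by apply: eq_bigr => j _; rewrite !mxE mulrC.
have ratio_real j : `|v 0 j| / val (x j) \is Num.real.
  by apply: ger0_real; apply: divr_ge0 => //; apply: ltW.
have [i Hi] := ord_argmax (fun j => in_algR (ratio_real j)) n0.
set m := `|v 0 i| / val (x i) in Hi.
have v_le j : `|v 0 j| <= m * val (x j) by rewrite -ler_pdivrMr; [exact: Hi|exact: x0].
have vi_gt0 : 0 < `|v 0 i|.
  rewrite normr_gt0; apply: contraNneq v_neq0 => vi0; apply/eqP/rowP => j.
  apply/eqP; rewrite mxE -normr_eq0 eq_le normr_ge0 andbT (le_trans (v_le j)) //.
  by rewrite /m vi0 normr0 !mul0r.
have m_xi : m * val (x i) = `|v 0 i| by rewrite divfK // lt0r_neq0.
have : `|z| * `|v 0 i| <= val t * `|v 0 i|.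
  have -> : val t * `|v 0 i| = \sum_j A i j * (m * val (x j)).
    by rewrite -m_xi mulrCA -HxC mulr_sumr; apply: eq_bigr => j _; rewrite mulrCA.
  rewrite -normrM -Hvi (le_trans (ler_norm_sum _ _ _)) //.
  by apply: ler_sum => j _; rewrite normrM ger0_norm ?ler_wpM2l.
by rewrite ler_pM2r.
Qed.

End RealAlgebraicMatrices.

Lemma seq_min_lb (s : seq algC) : (forall y, y \in s -> 0 <= y) ->
  0 <= seq_min s /\ forall y, y \in s -> seq_min s <= y.
Proof.
move=> s0; have : 0 <= head 0 s.
  by case: s s0 => [|y s] s0 //=; apply: s0; rewrite inE eqxx.
rewrite /seq_min; move: (head 0 s) => a a0.
elim: s s0 => [|y s IH] s0 //=.
have [m0 m_le] := IH (fun z zs => s0 z (ltac:(by rewrite inE zs orbT))).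
have y0 : 0 <= y by apply: s0; rewrite inE eqxx.
have [ym | my] := real_leP (ger0_real y0) (ger0_real m0); split => // z.
  by rewrite inE => /orP[/eqP-> // | /m_le]; apply: le_trans.
by rewrite inE => /orP[/eqP-> | /m_le]; [apply: ltW |].
Qed.

Lemma nonneg_mx_algR n (A : 'M[algC]_n) : nonneg_mx A ->
  exists2 B : 'M[algR]_n, A = map_mx algRval B & forall i j, 0 <= B i j.
Proof.
move=> A_ge0; exists (\matrix_(i, j) in_algR (ger0_real (A_ge0 i j))).
  by apply/matrixP => i j; rewrite !mxE.
by move=> i j; rewrite mxE; exact: A_ge0.
Qed.

Section ComplexToReal.
Variables (n : nat) (B : 'M[algR]_n).
Hypothesis B_ge0 : forall i j, 0 <= B i j.

Local Notation A := (map_mx algRval B).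

Lemma row_sum_map i : row_sum A i = val (\sum_j B i j).
Proof. by rewrite /row_sum rmorph_sum; apply: eq_bigr => j _; rewrite mxE. Qed.

Lemma last_row_sum_map (l : 'I_n) : val l = n.-1 ->
  last_row_sum A = val (\sum_j B l j).
Proof.
move=> l_last; rewrite /last_row_sum (nth_map l) ?size_enum_ord -?l_last ?ltn_ord //.
by rewrite -row_sum_map; congr row_sum; apply: val_inj; rewrite /= nth_enum_ord -?l_last.
Qed.

Lemma diag_min_map : exists2 S : algR, diag_min A = val S & forall i, S <= B i i.
Proof.
have [S0 S_le] : 0 <= diag_min A /\
    forall y, y \in [seq A i i | i <- enum 'I_n] -> diag_min A <= y.
  by apply: seq_min_lb => y /mapP[i _ ->]; rewrite mxE; exact: B_ge0.
exists (in_algR (ger0_real S0)) => // i.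
by have := S_le (A i i) (map_f _ (mem_enum _ i)); rewrite mxE.
Qed.

Lemma offdiag_min_map : exists T : algR,
  [/\ offdiag_min A = val T, 0 <= T & forall i j, i != j -> T <= B i j].
Proof.
have [T0 T_le] : 0 <= offdiag_min A /\ forall y,
    y \in [seq A ij.1 ij.2 | ij <- enum [pred ij : 'I_n * 'I_n | ij.1 != ij.2]] ->
    offdiag_min A <= y.
  by apply: seq_min_lb => y /mapP[ij _ ->]; rewrite mxE; exact: B_ge0.
exists (in_algR (ger0_real T0)); split => // i j ij.
by have := T_le (A i j) (map_f _ (_ : (i, j) \in _)); rewrite mxE; apply; rewrite mem_enum.
Qed.

Lemma spectral_radius_map : exists rho : algR, spectral_radius A = val rho.
Proof. by exists (in_algR (ger0_real (spectral_radius_ge0 A))). Qed.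

Lemma irreducible_map_connected : irreducible_mx A -> mx_connected B.
Proof.
move=> A_irr I I0 IT.
have [/exists_inP[i iI /exists_inP[j jI Bij]] | none] :=
  boolP [exists i in I, exists j in ~: I, B i j != 0].
  by exists i, j; rewrite inE in jI.
case: A_irr; exists I; split => // i j iI jI; rewrite mxE.
by move/exists_inPn/(_ i iI)/exists_inPn/(_ j): none; rewrite inE jI negbK => /(_ isT)/eqP->.
Qed.

Lemma equality_case_map (S T : algR) :
  equality_case A (val S) (val T) <-> equality_case B S T.
Proof.
have rs i : \sum_j A i j = val (\sum_j B i j) := row_sum_map i.
have e_val (x y : algR) : val x = val y <-> x = y by split => [/val_inj | ->].
rewrite /equality_case; split.
  case=> [H | [T0 [t [t1 tn Hd Ho Ht]]]]; [left | right; split => //; exists t; split => //].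
  - by move=> i j; apply/e_val; rewrite -!rs.
  - by move=> k kt; apply/e_val; rewrite -(Hd k kt) mxE.
  - by move=> k m mt km; apply/e_val; rewrite -(Ho k m mt km) mxE.
  - by move=> k m tk tm; apply/e_val; rewrite -!rs (Ht k m tk tm).
case=> [H | [T0 [t [t1 tn Hd Ho Ht]]]]; [left | right; split => //; exists t; split => //].
- by move=> i j; rewrite !rs (H i j).
- by move=> k kt; rewrite mxE (Hd k kt).
- by move=> k m mt km; rewrite mxE (Ho k m mt km).
- by move=> k m tk tm; rewrite !rs (Ht k m tk tm).
Qed.

End ComplexToReal.

Lemma sqrtC_val (x : algR) : 0 <= x -> sqrtC (val x) = val (Num.sqrt x).
Proof.
move=> x0; rewrite -[in LHS](sqr_sqrtr x0) rmorphXn sqrCK //.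
exact: (sqrtr_ge0 x : 0 <= val (Num.sqrt x)).
Qed.

Lemma bound_with_val (rn S T Sig : algR) : 0 <= T -> 0 <= Sig ->
  bound_with sqrtC (val rn) (val S) (val T) (val Sig) =
  val (bound_with Num.sqrt rn S T Sig).
Proof.
move=> T0 Sig0; rewrite /bound_with.
have D0 : 0 <= (rn - S + T) ^+ 2 + 4 * T * Sig.
  by rewrite addr_ge0 ?sqr_ge0 // -mulrA !mulr_ge0.
have -> : sqrtC ((val rn - val S + val T) ^+ 2 + 4 * val T * val Sig) =
    val (Num.sqrt ((rn - S + T) ^+ 2 + 4 * T * Sig)) := sqrtC_val D0.
by [].
Qed.

Lemma row_sum_bound_map n (B : 'M[algR]_n) (l : 'I_n) (rho S T : algR) :
  let Sig := \sum_(k < n | (k < n.-1)%N) (\sum_j B k j - \sum_j B l j) in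
  0 <= T -> 0 <= Sig ->
  let th := bound_with Num.sqrt (\sum_j B l j) S T Sig in
  th <= rho /\ (rho = th <-> equality_case B S T) ->
  let r := row_sum (map_mx algRval B) in
  let rn := val (\sum_j B l j) in
  let thC := bound_with sqrtC rn (val S) (val T)
               (\sum_(k < n | (k < n.-1)%N) (r k - rn)) in
  thC <= val rho /\ (val rho = thC <-> equality_case (map_mx algRval B) (val S) (val T)).
Proof.
move=> Sig T0 Sig0 th [th_rho eqv] r rn thC.
have -> : thC = val th.
  rewrite /thC -bound_with_val //; congr bound_with.
  by rewrite rmorph_sum; apply: eq_bigr => k _; rewrite /r row_sum_map rmorphB.
rewrite equality_case_map -eqv; split => //.
by split => [/val_inj | ->].
Qed.

Unset Implicit Arguments.

Theorem corollary3 (n : nat) (A : 'M[algC]_n) :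
  (2 <= n)%N ->
  nonneg_mx A ->
  irreducible_mx A ->
  (forall i j : 'I_n, (i <= j)%N -> row_sum A j <= row_sum A i) ->
  let r := row_sum A in
  let rn := last_row_sum A in
  let S := diag_min A in
  let T := offdiag_min A in
  let bound :=
    (rn + S - T
      + sqrtC ((rn - S + T) ^+ 2
               + 4 * T * \sum_(k < n | (k < n.-1)%N) (r k - rn))) / 2 in
  bound <= spectral_radius A /\
  (spectral_radius A = bound <->
     ((forall i j : 'I_n, r i = r j) \/
      (0 < T /\
       exists t : nat, [/\ (1 <= t)%N, (t <= n.-1)%N,
         (forall k : 'I_n, (k < t)%N -> A k k = S),
         (forall k l : 'I_n, (l < t)%N -> k != l -> A k l = T) &
         (forall k l : 'I_n, (t <= k)%N -> (t <= l)%N -> r k = r l)]))).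
Proof.
move=> n2 A_ge0; have [B -> B_ge0] := nonneg_mx_algR A_ge0 => A_irr A_sorted.
have n0 : (0 < n)%N := ltnW n2.
have [l l_last] : {l : 'I_n | val l = n.-1}.
  have lt_n : (n.-1 < n)%N by rewrite ltn_predL.
  by exists (Ordinal lt_n).
have rows_sorted (i j : 'I_n) : (i <= j)%N -> \sum_k B j k <= \sum_k B i k.
  by move=> ij; have := A_sorted i j ij; rewrite !row_sum_map.
have [S -> S_le] := diag_min_map B_ge0.
have [T [-> T_ge0 T_le]] := offdiag_min_map B_ge0.
have [rho rho_eq] := spectral_radius_map B.
rewrite rho_eq (last_row_sum_map B l_last).
have cw_lo := cw_lower_spectral_radius B_ge0 n0 (esym rho_eq).
have cw_up := cw_upper_spectral_radius B_ge0 n0 (esym rho_eq).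
have B_conn := irreducible_map_connected A_irr.
exact (row_sum_bound_map T_ge0 (Sig_ge0 l_last rows_sorted)
  (row_sum_bound B_ge0 B_conn cw_lo cw_up l_last rows_sorted S_le T_le T_ge0)).
Qed.
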